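(* Let $p$ be a prime, $e\ge2$ and $r\ge2$ integers, and let $R$ be a ring of characteristic $p^{r+1}$. Then there is an $R$-ring automorphism $\alpha$ of the polynomial ring $R[x]$ (fixing $R$ elementwise) with $\alpha(x)=x+px^e$, and $\alpha$ has order exactly $p^r$. Consequently $x^{p^r}$ and $y^{p^r}$ are central elements of the Ore extension $R[x][y;\alpha]$ (in which $yf=\alpha(f)y$ for $f\in R[x]$).
   Context: $R[x]$ is the ordinary polynomial ring with $x$ central. $R[x][y;\alpha]$ is the free left $R[x]$-module on $\{y^n:n\in\mathbb N\}$ with multiplication determined by $yf=\alpha(f)y$. *)

From HB Require Import structures.
From mathcomp Require Import all_boot all_order all_algebra.
Set Implicit Arguments. Unset Strict Implicit. Unset Printing Implicit Defensive.
Import GRing.Theory.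
Local Open Scope ring_scope.

Definition has_char (R : nzRingType) (n : nat) : Prop :=
  (0 < n)%N /\ (n%:R = 0 :> R) /\ (forall m : nat, (0 < m < n)%N -> m%:R <> 0 :> R).

(* The Ore extension R[x][y; alpha]: its elements are represented as
   polynomials in y with (left) coefficients in R[x], i.e. u = \sum_i u_i y^i,
   and multiplication is determined by y f = alpha(f) y:
   (\sum_i u_i y^i)(\sum_j v_j y^j) = \sum_{i,j} u_i alpha^i(v_j) y^(i+j). *)
Definition ore_mul (R : nzRingType) (alpha : {poly R} -> {poly R})
    (u v : {poly {poly R}}) : {poly {poly R}} :=
  \sum_(i < size u) \sum_(j < size v)
     ((u`_i * iter i alpha v`_j) *: 'X^(i + j)).

Definition ore_central (R : nzRingType) (alpha : {poly R} -> {poly R})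
    (z : {poly {poly R}}) : Prop :=
  forall u : {poly {poly R}}, ore_mul alpha u z = ore_mul alpha z u.

(* alpha is the substitution x |-> x + p x^e, so alpha f - f is always a multiple
   of p.  Writing alpha = 1 + (alpha - 1), the binomial formula gives
   alpha^(p^r) = sum_k C(p^r, k) (alpha - 1)^k, where (alpha - 1)^k f is a
   multiple of p^k and p^(r+1) divides C(p^r, k) p^k for k >= 1; hence
   alpha^(p^r) = id in characteristic p^(r+1).  In the same way
   alpha(x^(p^r)) = x^(p^r) (1 + p x^(e-1))^(p^r) = x^(p^r).  Modulo x^(e+1)
   one has alpha^k(x) = x + k p x^e, and k p is nonzero in R for 0 < k < p^r,
   so the order is exactly p^r.  Centrality of x^(p^r) and y^(p^r) in the Ore
   extension then only uses alpha(x^(p^r)) = x^(p^r) and alpha^(p^r) = id. *)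

From HB Require Import structures.
From mathcomp Require Import all_boot all_order all_algebra zify.
Set Implicit Arguments. Unset Strict Implicit. Unset Printing Implicit Defensive.
Import GRing.Theory.

Lemma pexpS_dvdn_bin_mul_exp p r k : prime p -> (0 < k <= p ^ r)%N ->
  (p ^ r.+1 %| 'C(p ^ r, k) * p ^ k)%N.
Proof.
move=> p_pr /andP[k_gt0 k_le].
have p_gt1 := prime_gt1 p_pr.
have bin_gt0 : 0 < 'C(p ^ r, k) by rewrite bin_gt0.
have dvd_kbin : p ^ r %| k * 'C(p ^ r, k).
  by case: k k_gt0 {k_le bin_gt0} => // k _; rewrite -mul_bin_diag dvdn_mulr.
rewrite pfactor_dvdn ?muln_gt0 ?k_gt0 // lognM // in dvd_kbin.
have logk_lt : logn p k < k.
  apply: (@leq_trans (p ^ logn p k)); first exact: ltn_expl.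
  by apply: dvdn_leq => //; exact: pfactor_dvdnn.
rewrite pfactor_dvdn ?muln_gt0 ?bin_gt0 ?expn_gt0 ?prime_gt0 //.
rewrite lognM // ?expn_gt0 ?prime_gt0 // pfactorK //.
lia.
Qed.

Local Open Scope ring_scope.

Lemma bin_mul_pexp_eq0 (V : nmodType) p r k (g : V) :
  prime p -> g *+ p ^ r.+1 = 0 -> (0 < k <= p ^ r)%N ->
  g *+ ('C(p ^ r, k) * p ^ k) = 0.
Proof.
move=> p_pr g_tor k_range.
have /dvdnP[m ->] := pexpS_dvdn_bin_mul_exp p_pr k_range.
by rewrite mulnC mulrnA g_tor mul0rn.
Qed.

Section IterBinomial.
Variables (V : zmodType) (a : {additive V -> V}).
Local Notation delta := (a \- idfun).

Lemma iter_binomial n g :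
  iter n a g = \sum_(k < n.+1) iter k delta g *+ 'C(n, k).
Proof.
elim: n => [|n IH]; first by rewrite big_ord1 mulr1n.
have aE x : a x = x + delta x by rewrite /= addrC subrK.
have delta_sum : delta (\sum_(k < n.+1) iter k delta g *+ 'C(n, k))
    = \sum_(k < n.+1) iter k.+1 delta g *+ 'C(n, k).
  by rewrite raddf_sum; apply: eq_bigr => k _; rewrite raddfMn.
rewrite iterS aE IH delta_sum big_ord_recl [in RHS]big_ord_recl.
under [in RHS]eq_bigr => k _ do rewrite lift0 binS mulrnDr.
rewrite big_split -addrA; congr (_ + _); first by rewrite !bin0.
congr (_ + _).
rewrite [RHS]big_ord_recr /= bin_small // mulr0n addr0.
by apply: eq_bigr => k _; rewrite /bump /= add1n.
Qed.

Lemma iter_delta_mulrn c :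
  (forall g, exists h, delta g = h *+ c) ->
  forall k g, exists h, iter k delta g = h *+ c ^ k.
Proof.
move=> delta_c; elim=> [|k IH] g; first by exists g.
rewrite iterS; have [h ->] := IH g; have [h' h'E] := delta_c h.
by exists h'; rewrite raddfMn expnSr mulnC mulrnA -h'E.
Qed.

Lemma iter_pexp_id p r :
  prime p -> (forall g : V, g *+ p ^ r.+1 = 0) ->
  (forall g, exists h, delta g = h *+ p) ->
  forall g, iter (p ^ r) a g = g.
Proof.
move=> p_pr V_tor delta_p g.
rewrite iter_binomial big_ord_recl bin0 mulr1n big1 ?addr0 // => k _.
have [h ->] := iter_delta_mulrn delta_p (lift ord0 k) g.
by rewrite -mulrnA mulnC bin_mul_pexp_eq0 // lift0 ltn_ord.
Qed.

End IterBinomial.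

Lemma expr1Dn_mulrn_char (A : nzRingType) p r (t : A) :
  prime p -> (p ^ r.+1)%:R = 0 :> A -> (1 + t *+ p) ^+ (p ^ r) = 1.
Proof.
move=> p_pr char_A; rewrite addrC exprD1n big_ord_recl expr0 bin0 mulr1n.
rewrite big1 ?addr0 // => k _.
rewrite exprMn_n -mulrnA mulnC bin_mul_pexp_eq0 ?lift0 ?ltn_ord //.
by rewrite -mulr_natr char_A mulr0.
Qed.

Lemma iter_id_bijective (T : Type) (f : T -> T) n :
  (0 < n)%N -> (forall x, iter n f x = x) -> bijective f.
Proof.
move=> n_gt0 fn_id; exists (iter n.-1 f) => x.
  by rewrite -iterSr prednK.
by rewrite -iterS prednK.
Qed.

Section OreCentral.
Variables (R : nzRingType) (alpha : {poly R} -> {poly R}).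

Lemma ore_centralC c :
  alpha c = c -> (forall f, GRing.comm f c) -> ore_central alpha c%:P.
Proof.
move=> alpha_c c_comm u; rewrite /ore_mul size_polyC.
have [-> | _] := eqVneq c 0.
  by rewrite big_ord0 big1 // => i _; rewrite big_ord0.
rewrite big_ord1; apply: eq_bigr => i _.
by rewrite big_ord1 /= !coefC eqxx iter_fix // addn0 add0n c_comm.
Qed.

Lemma ore_centralXn n :
  alpha 0 = 0 -> alpha 1 = 1 -> (forall f, iter n alpha f = f) ->
  ore_central alpha 'X^n.
Proof.
move=> alpha0 alpha1 alpha_n u; rewrite /ore_mul size_polyXn.
have coefXn_lt (j : 'I_n) : ('X^n : {poly {poly R}})`_j = 0.
  by rewrite coefXn ltn_eqF.
transitivity (\sum_(i < size u) u`_i *: 'X^(i + n)).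
  apply: eq_bigr => i _; rewrite big_ord_recr /= big1 ?add0r => [|j _].
    by rewrite coefXn eqxx iter_fix // mulr1.
  by rewrite coefXn_lt iter_fix // mulr0 scale0r.
rewrite [RHS]big_ord_recr /= [X in _ = X + _]big1 ?add0r => [|i _]; last first.
  by apply: big1 => j _; rewrite coefXn_lt mul0r scale0r.
by apply: eq_bigr => j _; rewrite coefXn eqxx mul1r alpha_n addnC.
Qed.

End OreCentral.

Lemma expr1DX (R : nzRingType) (w : {poly R}) m :
  exists b, (1 + 'X * w) ^+ m = 1 + 'X * b.
Proof.
elim: m => [|m [b IH]]; first by exists 0; rewrite expr0 mulr0 addr0.
exists (b + w + b * 'X * w).
rewrite exprSr IH mulrDl mul1r !mulrDr mulr1 !mulrA !addrA.
by rewrite [1 + _ + 'X * w]addrAC.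
Qed.

Section SubstitutionMorphism.
Variables (R : nzRingType) (p e : nat).

Definition alpha_x : {poly R} := 'X + 'X^e *+ p.

Fact alpha_x_comm : commr_rmorph (@polyC R) alpha_x.
Proof.
move=> c; rewrite /GRing.comm /alpha_x mulrDl mulrDr mulrnAl mulrnAr.
by rewrite (commr_sym (commr_polyX _)) (commr_sym (commr_polyXn _ _)).
Qed.

Definition alpha_pe := horner_morph alpha_x_comm.
HB.instance Definition _ := GRing.RMorphism.on alpha_pe.

Lemma alpha_peC c : alpha_pe c%:P = c%:P.
Proof. exact: horner_morphC. Qed.

Lemma alpha_peX : alpha_pe 'X = alpha_x.
Proof. exact: horner_morphX. Qed.

Lemma alpha_pe_sub_mulrn f : exists h, alpha_pe f - f = h *+ p.
Proof.
elim/poly_ind: f => [|f c [h hE]]; first by exists 0; rewrite rmorph0 subr0 mul0rn.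
exists (f * 'X^e + h * alpha_x).
rewrite rmorphD rmorphM /= alpha_peX alpha_peC.
have -> : alpha_pe f = f + h *+ p by rewrite -hE addrC subrK.
rewrite opprD addrACA subrr addr0 mulrDl {1}/alpha_x mulrDr.
rewrite addrAC [f * 'X + _]addrC addrK.
by rewrite mulrnAl mulrnAr mulrnDl.
Qed.

Definition alpha_u : {poly R} := 1 + 'X^(e.-1) *+ p.

Lemma alpha_peXn m : (0 < e)%N -> alpha_pe 'X^m = 'X^m * alpha_u ^+ m.
Proof.
move=> e_gt0; rewrite rmorphXn /= alpha_peX.
have -> : alpha_x = 'X * alpha_u.
  by rewrite /alpha_x /alpha_u mulrDr mulr1 mulrnAr -exprS prednK.
by rewrite exprMn_comm //; exact: commr_sym (commr_polyX _).
Qed.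

Lemma iter_alpha_peX k : (1 < e)%N ->
  exists g, iter k alpha_pe 'X = 'X + 'X^e *+ (k * p) + 'X^(e.+1) * g.
Proof.
move=> e_gt1; elim: k => [|k [g IH]].
  by exists 0; rewrite mul0n mulr0n mulr0 !addr0.
have [b ub] : exists b, alpha_u ^+ e = 1 + 'X * b.
  suff -> : alpha_u = 1 + 'X * ('X^(e.-2) *+ p) by exact: expr1DX.
  by rewrite /alpha_u mulrnAr -exprS; congr (1 + 'X^_ *+ _); lia.
exists (b *+ (k * p) + alpha_u ^+ e.+1 * alpha_pe g).
rewrite iterS IH !rmorphD rmorphMn rmorphM /= alpha_peX !alpha_peXn ?ub; try lia.
rewrite /alpha_x mulrDr mulr1 mulrA -exprSr mulSn mulrnDr mulrnDl.
by rewrite mulrDr mulrnAr mulrA !addrA.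
Qed.

Lemma iter_alpha_peX_neq k : (1 < e)%N -> (k * p)%:R != 0 :> R ->
  iter k alpha_pe 'X != 'X.
Proof.
move=> e_gt1; apply: contra_neq => iter_k_id.
have e_neq1 : (e == 1)%N = false by apply/eqP; lia.
have [g gE] := iter_alpha_peX k e_gt1.
have := congr1 (coefp e) gE; rewrite /= iter_k_id.
by rewrite !coefD coefMn coefX coefXn coefXnM eqxx ltnSn e_neq1 add0r addr0.
Qed.

Section Characteristic.
Variable r : nat.
Hypotheses (p_pr : prime p) (char_R : (p ^ r.+1)%:R = 0 :> R).

Lemma char_poly : (p ^ r.+1)%:R = 0 :> {poly R}.
Proof. by rewrite -polyC_natr char_R. Qed.

Lemma iter_alpha_pe_pexp f : iter (p ^ r) alpha_pe f = f.
Proof.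
apply: (iter_pexp_id p_pr) alpha_pe_sub_mulrn f => g.
by rewrite -mulr_natr char_poly mulr0.
Qed.

Lemma alpha_peX_pexp : (0 < e)%N -> alpha_pe 'X^(p ^ r) = 'X^(p ^ r).
Proof.
by move=> e_gt0; rewrite alpha_peXn // (expr1Dn_mulrn_char _ p_pr char_poly) mulr1.
Qed.

End Characteristic.
End SubstitutionMorphism.

Theorem mainTheorem19 (R : nzRingType) (p e r : nat) :
  prime p -> (2 <= e)%N -> (2 <= r)%N -> has_char R (p ^ r.+1) ->
  exists alpha : {poly R} -> {poly R},
    [/\ (* alpha is an R-ring automorphism of R[x] fixing R elementwise *)
        (forall f g, alpha (f + g) = alpha f + alpha g),
        (forall f g, alpha (f * g) = alpha f * alpha g),
        alpha 1 = 1,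
        bijective alpha &
        (forall c : R, alpha c%:P = c%:P)]
    /\ [/\ alpha 'X = 'X + p%:R *: 'X^e,
        (* alpha has order exactly p^r *)
        (forall f, iter (p ^ r) alpha f = f),
        (forall k : nat, (0 < k < p ^ r)%N -> exists f, iter k alpha f <> f),
        (* x^(p^r) and y^(p^r) are central in R[x][y; alpha] *)
        ore_central alpha (('X^(p ^ r))%:P) &
        ore_central alpha 'X^(p ^ r)].
Proof.
move=> p_pr e_gt1 _ [_ [char_R char_min]].
have alpha_order := iter_alpha_pe_pexp e p_pr char_R.
exists (alpha_pe p e); split; first split.
- exact: rmorphD.
- exact: rmorphM.
- exact: rmorph1.
- by apply: iter_id_bijective alpha_order; rewrite expn_gt0 prime_gt0.
- exact: alpha_peC.
split.
- by rewrite alpha_peX scaler_nat.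
- exact: alpha_order.
- move=> k /andP[k_gt0 k_lt]; exists 'X; apply/eqP/iter_alpha_peX_neq => //.
  apply/eqP/char_min.
  by rewrite muln_gt0 k_gt0 prime_gt0 //= expnSr ltn_mul2r prime_gt0.
- apply: ore_centralC => [|f]; last exact: commr_polyXn.
  by apply: (alpha_peX_pexp p_pr char_R); lia.
- by apply: ore_centralXn alpha_order; rewrite ?rmorph0 ?rmorph1.
Qed.
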